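(* Let $x_1,\dots,x_n$ be the values of the variables $x_i$ after the last iteration of Algorithm 1 on an instance of Problem (P). Then either $\sum_{i=1}^n z_ix_i=K$, or $x_i=q_i$ for every $i$.
   Context: Problem (P): given an integer $n\ge1$, reals $0<q_1\le\cdots\le q_n$, $z_1,\dots,z_n>0$ and $K>0$, maximize $\sum_{i=1}^n x_i$ subject to $0\le x_i\le q_i$ for all $i$, $0\le x_1\le x_2\le\cdots\le x_n$, and $\sum_{i=1}^n z_ix_i\le K$. For $1\le i<j\le n+1$ let $\mathrm{sum}(i,j)=z_i+z_{i+1}+\cdots+z_{j-1}$ and $\mathrm{avg}(i,j)=\mathrm{sum}(i,j)/(j-i)$. Algorithm 1: Initialize $S=\{0,n+1\}$, $y_i=\mathrm{avg}(i,n+1)$ and $x_i=0$ for $i=1,\dots,n$, and $\hat B=K$. While $\hat B>0$ and $S\ne\{0,1,\dots,n+1\}$, perform an iteration: let $i^*$ be the index $i\in\{1,\dots,n\}\setminus S$ minimizing $y_i$, ties broken in favour of the smallest index; let $i_L=\max\{j\in S:j<i^*\}$ and $i_R=\min\{j\in S:j>i^*\}$; set $d=\min\{\hat B/((i_R-i^* )y_{i^*}),\ q_{i^*}-x_{i^*}\}$; set $\hat B\leftarrow\hat B-d(i_R-i^* )y_{i^*}$; set $x_i\leftarrow x_i+d$ for all $i^*\le i<i_R$; set $y_i\leftarrow\mathrm{avg}(i,i^* )$ for all $i_L<i<i^*$; add $i^*$ to $S$. When the loop ends, output $x_1,\dots,x_n$. *)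

From mathcomp Require Import all_boot all_order all_algebra.
Set Implicit Arguments. Unset Strict Implicit. Unset Printing Implicit Defensive.
Import Order.TTheory GRing.Theory Num.Theory.
Local Open Scope ring_scope.

Section Algo.
Variables (R : realFieldType) (n : nat) (q z : nat -> R) (K : R).

Definition zsum (i j : nat) : R := \sum_(i <= k < j) z k.
Definition avg (i j : nat) : R := zsum i j / (j - i)%:R.

(* State of Algorithm 1: the set S (as a list of indices), x, y, and B^. *)
Record state := State { stS : seq nat; stx : nat -> R; sty : nat -> R; stB : R }.

Definition init_state : state :=
  State [:: 0%N; n.+1] (fun _ => 0) (fun i => avg i n.+1) K.

Definition cands (st : state) : seq nat :=
  [seq i <- iota 1 n | i \notin stS st].

Definition istar (st : state) : nat :=
  let c := cands st in
  foldl (fun b i => if sty st i < sty st b then i else b) (head 0%N c) (behead c).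

Definition iL (st : state) (ist : nat) : nat :=
  \max_(j <- stS st | (j < ist)%N) j.
Definition iR (st : state) (ist : nat) : nat :=
  \big[minn/n.+1]_(j <- stS st | (ist < j)%N) j.

Definition step (st : state) : state :=
  let ist := istar st in
  let l := iL st ist in
  let r := iR st ist in
  let w := (r - ist)%:R * sty st ist in
  let d := Num.min (stB st / w) (q ist - stx st ist) in
  State (ist :: stS st)
        (fun i => if (ist <= i < r)%N then stx st i + d else stx st i)
        (fun i => if (l < i < ist)%N then avg i ist else sty st i)
        (stB st - d * w).

(* while B^ > 0 and S <> {0,...,n+1}.  Each iteration adds a new index of
   {1..n} to S, so at most n iterations occur; fuel n is thus exact. *)
Fixpoint run (fuel : nat) (st : state) : state :=
  if fuel is k.+1 then
    if (0 < stB st) && (cands st != [::]) then run k (step st) else st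
  else st.

Definition algo1_output : nat -> R := stx (run n init_state).

End Algo.

(* Along the run four facts are invariant: y_i = avg(i, s_i) for every i
   outside S, where s_i is the next element of S after i; sum_i z_i x_i + B = K;
   B >= 0; and either B = 0 or x_i = q_i for every i in S.  By the first one,
   the charge d (i_R - j) y_j of an iteration with chosen index j is exactly d
   times the z-weight of the block [j, i_R) whose x's are raised by d, so the
   budget identity survives; as d is a minimum, the iteration either spends all
   of B or saturates x_j.  Every iteration adds a fresh index to S, so the loop
   stops with B = 0 or S = {0, ..., n+1}. *)

From mathcomp Require Import all_boot all_order all_algebra zify lra.
Set Implicit Arguments. Unset Strict Implicit. Unset Printing Implicit Defensive.

Import Order.TTheory GRing.Theory Num.Theory.
Local Open Scope ring_scope.

Lemma foldl_select_mem (T : eqType) (f : T -> T -> bool) (b : T) (s : seq T) :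
  foldl (fun b i => if f b i then i else b) b s \in b :: s.
Proof.
elim: s b => [|a s IHs] b /=; first exact: mem_head.
by case: ifP => _; [move: (IHs a) | move: (IHs b)];
  rewrite !inE => /orP[] ->; rewrite ?orbT.
Qed.

Lemma big_nat_range_mkcond (V : nmodType) (F : nat -> V) lo a b hi :
  (lo <= a)%N -> (b <= hi)%N ->
  \sum_(lo <= i < hi) (if (a <= i < b)%N then F i else 0) = \sum_(a <= i < b) F i.
Proof.
move=> lo_a b_hi; rewrite (big_nat_widenl a lo) // (big_nat_widen lo b hi) //.
by rewrite [RHS]big_mkcond.
Qed.

Lemma sumr_raise_range (R : comPzRingType) (z x : nat -> R) d lo a b hi :
  (lo <= a)%N -> (b <= hi)%N ->
  \sum_(lo <= i < hi) z i * (if (a <= i < b)%N then x i + d else x i) =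
  \sum_(lo <= i < hi) z i * x i + d * \sum_(a <= i < b) z i.
Proof.
move=> lo_a b_hi; rewrite -(big_nat_range_mkcond z lo_a b_hi) mulr_sumr -big_split.
by apply: eq_bigr => i _; case: ifP => _ /=; rewrite ?mulr0 ?addr0 // mulrDr (mulrC d).
Qed.

Lemma sumr_nat_gt0 (R : numDomainType) (F : nat -> R) a b :
  (a < b)%N -> (forall k, (a <= k < b)%N -> 0 < F k) -> 0 < \sum_(a <= k < b) F k.
Proof.
move=> ab F_gt0; rewrite big_ltn // ltr_wpDr ?F_gt0 ?leqnn //.
rewrite big_nat_cond sumr_ge0 // => k /andP[/andP[ak kb] _].
by rewrite ltW // F_gt0 // kb (ltnW ak).
Qed.

Section Algorithm.
Variables (R : realFieldType) (n : nat) (q z : nat -> R) (K : R).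
Hypothesis z_gt0 : forall k, (1 <= k <= n)%N -> 0 < z k.

(* [minn] is convertible to [Order.min] on [nat], so the order-theoretic
   big-min lemmas apply to [iR]. *)
Lemma iR_bounds (st : state R) i : (i <= n)%N -> (i < iR n st i <= n.+1)%N.
Proof.
move=> le_i_n; apply/andP; split; last exact: (@bigmin_le_id _ nat).
exact: (@lt_bigmin _ nat).
Qed.

Lemma iR_le (st : state R) i j : j \in stS st -> (i < j)%N -> (iR n st i <= j)%N.
Proof. by move=> jS ij; apply: (@ge_bigmin_seq _ nat). Qed.

Lemma iL_lt_iR_ge (st : state R) a i : (0 < i)%N -> (i < a <= n.+1)%N ->
  i \notin stS st -> (iL st a < i)%N = (a <= iR n st i)%N.
Proof.
move=> i_gt0 /andP[ia a_le] iS; apply/idP/idP => [iLi | a_iR].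
  rewrite /iR big_seq_cond; apply: (@le_bigmin _ nat) => // j /andP[jS ij].
  rewrite leEnat leqNgt; apply/negP => ja.
  have := @leq_bigmax_seq _ _ (fun j => j < a)%N id _ jS ja; rewrite -/(iL st a); lia.
suff : (iL st a <= i.-1)%N by lia.
apply/bigmax_leqP_seq => j jS ja.
have j_ne_i : j != i by apply: contraNneq iS => <-.
have [ij|] := ltnP i j; last by lia.
by have := iR_le jS ij; lia.
Qed.

Lemma istar_mem_cands (st : state R) : cands n st != [::] -> istar n st \in cands n st.
Proof. by rewrite /istar; case: (cands n st) => //= c s _; apply: foldl_select_mem. Qed.

Lemma mem_cands (st : state R) i :
  (i \in cands n st) = [&& i \notin stS st, 0 < i & i <= n]%N.
Proof. by rewrite mem_filter mem_iota add1n ltnS. Qed.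

Lemma cands_step (st : state R) :
  cands n (step n q z st) = rem (istar n st) (cands n st).
Proof.
rewrite rem_filter ?filter_uniq ?iota_uniq // /cands -filter_predI.
by apply: eq_filter => i /=; rewrite inE negb_or andbC.
Qed.

Lemma size_cands_step (st : state R) : cands n st != [::] ->
  (size (cands n (step n q z st)) < size (cands n st))%N.
Proof.
move=> /istar_mem_cands ist_in; rewrite cands_step size_rem // ltn_predL.
by case: (cands n st) ist_in.
Qed.

Lemma zsum_gt0 i j : (0 < i < j)%N -> (j <= n.+1)%N -> 0 < zsum z i j.
Proof. by move=> /andP[i_gt0 ij] j_le; apply: sumr_nat_gt0 => // k ik; apply: z_gt0; lia. Qed.

Record invariant (st : state R) : Prop := Invariant {
  inv_avg : forall i, (1 <= i <= n)%N -> i \notin stS st ->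
    sty st i = avg z i (iR n st i);
  inv_budget : \sum_(1 <= i < n.+1) z i * stx st i + stB st = K;
  inv_B_ge0 : 0 <= stB st;
  inv_saturated : stB st = 0 \/
    forall i, (1 <= i <= n)%N -> i \in stS st -> stx st i = q i }.

Lemma invariant_init : 0 < K -> invariant (init_state n z K).
Proof.
move=> K_gt0; split => /=.
- by move=> i /andP[_ i_le_n] _; rewrite /iR /= !big_cons big_nil ltnS i_le_n minnn.
- by rewrite big1 ?add0r // => i _; rewrite mulr0.
- exact: ltW.
- by right => i /andP[i_gt0 i_le_n]; rewrite !inE => /orP[] /eqP i_eq; lia.
Qed.

Section Step.
Variable st : state R.
Hypotheses (st_inv : invariant st) (B_gt0 : 0 < stB st) (cands_nz : cands n st != [::]).

Let ist := istar n st.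
Let r := iR n st ist.
Let w := zsum z ist r.
Let d := Num.min (stB st / w) (q ist - stx st ist).

Let ist_cand : [&& ist \notin stS st, 0 < ist & ist <= n]%N.
Proof. by rewrite -mem_cands istar_mem_cands. Qed.

Let r_bounds : (ist < r <= n.+1)%N.
Proof. by case/and3P: ist_cand => _ _; apply: iR_bounds. Qed.

Let w_gt0 : 0 < w.
Proof. by apply: zsum_gt0 => //; lia. Qed.

Let stepE : step n q z st =
  State (ist :: stS st)
        (fun i => if (ist <= i < r)%N then stx st i + d else stx st i)
        (fun i => if (iL st ist < i < ist)%N then avg z i ist else sty st i)
        (stB st - d * w).
Proof.
have [ist_S ist_gt0 ist_le_n] := and3P ist_cand.
have weight : (r - ist)%:R * sty st ist = w.
  rewrite (inv_avg st_inv) /avg ?ist_gt0 //.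
  by rewrite mulrC divfK // pnatr_eq0 subn_eq0 -ltnNge; case/andP: r_bounds.
by rewrite /step -/ist -/r weight.
Qed.

Lemma step_invariant : invariant (step n q z st).
Proof.
have [ist_S ist_gt0 ist_le_n] := and3P ist_cand.
have [ist_r r_le] := andP r_bounds.
rewrite stepE; split => /=.
- move=> i /andP[i_gt0 i_le_n]; rewrite inE negb_or => /andP[_ iS].
  rewrite /iR big_cons -/(iR n st i).
  have [i_lt|i_ge] := ltnP i ist; last by rewrite andbF (inv_avg st_inv) ?i_gt0.
  rewrite andbT iL_lt_iR_ge ?i_lt ?(leqW ist_le_n) //.
  by case: leqP => // _; rewrite (inv_avg st_inv) ?i_gt0.
- rewrite sumr_raise_range // -/(zsum z ist r) -/w; have := inv_budget st_inv; lra.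
- by rewrite subr_ge0 -ler_pdivlMr // ge_min lexx.
- have [B_le | q_lt] := leP (stB st / w) (q ist - stx st ist).
    by left; rewrite /d (min_l B_le) divfK ?gt_eqF // subrr.
  right=> i i_range; rewrite inE => /orP[/eqP -> | iS].
    by rewrite leqnn ist_r /d (min_r (ltW q_lt)) addrC subrK.
  case: (inv_saturated st_inv) => [B0 | q_on_S]; first by move: B_gt0; rewrite B0 ltxx.
  rewrite ifF ?q_on_S //; apply/negbTE/andP => -[ist_i i_r].
  have i_ne : i != ist by apply: contraNneq ist_S => <-.
  by have := iR_le iS (_ : ist < i)%N; rewrite -/r; lia.
Qed.

End Step.

Lemma run_invariant fuel (st : state R) : invariant st -> invariant (run n q z fuel st).
Proof.
elim: fuel st => [|fuel IHfuel] st st_inv //=.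
by case: ifP => // /andP[B_gt0 cands_nz]; apply/IHfuel/step_invariant.
Qed.

Lemma run_halts fuel (st : state R) : (size (cands n st) <= fuel)%N ->
  stB (run n q z fuel st) <= 0 \/ cands n (run n q z fuel st) = [::].
Proof.
elim: fuel st => [|fuel IHfuel] st size_le /=.
  by right; apply/eqP; rewrite -size_eq0 -leqn0.
case: ifPn => [/andP[_ cands_nz] | ].
  by apply: IHfuel; rewrite -ltnS (leq_trans (size_cands_step cands_nz)).
by rewrite negb_and -leNgt negbK => /orP[B_le0 | /eqP cands_nil]; [left | right].
Qed.

Lemma invariant_halted (st : state R) : invariant st ->
  stB st <= 0 \/ cands n st = [::] ->
  \sum_(1 <= i < n.+1) z i * stx st i = K \/
  forall i, (1 <= i <= n)%N -> stx st i = q i.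
Proof.
move=> st_inv halted; have budget := inv_budget st_inv.
case: (inv_saturated st_inv) => [B0 | q_on_S]; first by left; rewrite -budget B0 addr0.
case: halted => [B_le0 | cands_nil].
  have B0 : stB st = 0 by apply/le_anti; rewrite B_le0 inv_B_ge0.
  by left; rewrite -budget B0 addr0.
right=> i i_range; apply: q_on_S => //; apply: contraT => iS.
by have := mem_cands st i; rewrite cands_nil in_nil iS i_range.
Qed.

End Algorithm.

Theorem lemma4 (R : realFieldType) (n : nat) (q z : nat -> R) (K : R) :
  (1 <= n)%N ->
  0 < q 1%N ->
  (forall i, (1 <= i < n)%N -> q i <= q i.+1) ->
  (forall i, (1 <= i <= n)%N -> 0 < z i) ->
  0 < K ->
  let x := algo1_output n q z K in
  \sum_(1 <= i < n.+1) z i * x i = K \/ (forall i, (1 <= i <= n)%N -> x i = q i).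
Proof.
(* Only the positivity of z and K matters: the invariants survive even a negative d. *)
move=> _ _ _ z_gt0 K_gt0 x.
apply: invariant_halted; first exact/run_invariant/invariant_init.
by apply: run_halts; rewrite size_filter (leq_trans (count_size _ _)) ?size_iota.
Qed.
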